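(* Let $q$ be a prime and $m$ a positive integer. Let $C$ be a nonzero cyclic code of length $m$ over $\mathbb{F}_q$ such that no codeword of $C$ has Hamming weight $m$ (i.e. every codeword has at least one zero entry). Then the permutation group $G(C)$ of $\mathbb{Z}_q\times\mathbb{Z}_m$ is transitive and $\rho(G(C))=q$.
   Context: A linear code of length $m$ over $\mathbb{F}_q$ is a subspace of $\mathbb{F}_q^m$; it is cyclic if $(c_0,\dots,c_{m-1})\in C$ implies $(c_{m-1},c_0,\dots,c_{m-2})\in C$. The Hamming weight of a codeword is its number of nonzero entries. For a cyclic code $C$ of length $m$ over $\mathbb{F}_q$ ($q$ prime, entries identified with $\mathbb{Z}_q$), let $V=\mathbb{Z}_q\times\mathbb{Z}_m$, let $\alpha\in\mathrm{Sym}(V)$ be $\alpha(i,j)=(i,j+1)$, and for $\mathbf{c}=(c_0,\dots,c_{m-1})\in C$ let $\beta_{\mathbf{c}}(i,j)=(i+c_j,j)$. Then $G(C)=\langle \{\alpha\}\cup\{\beta_{\mathbf{c}}:\mathbf{c}\in C\}\rangle\le\mathrm{Sym}(V)$. For a permutation group $G$ on a set $V$, two elements $g,h\in G$ are intersecting if $g(v)=h(v)$ for some $v\in V$; a subset $\mathcal{F}\subseteq G$ is intersecting if every pair of its elements is intersecting. The intersection density of $G$ is $\rho(G)=\max\{|\mathcal{F}|:\mathcal{F}\subseteq G \text{ intersecting}\}/\max_{v\in V}|G_v|$, where $G_v$ is the stabilizer of $v$. *)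

From mathcomp Require Import all_boot all_order all_fingroup all_algebra.
Set Implicit Arguments. Unset Strict Implicit. Unset Printing Implicit Defensive.
Import GRing.Theory.
Local Open Scope ring_scope.

(* Codewords of length m over F_q are row vectors 'rV['F_q]_m; Z_m is 'I_m
   with cyclic successor ordS (m > 0 is a hypothesis of the theorem). *)

Definition cshift (q m : nat) (c : 'rV['F_q]_m) : 'rV['F_q]_m :=
  \row_j c 0 (ord_pred j).

Definition linear_code (q m : nat) (C : {set 'rV['F_q]_m}) : Prop :=
  0 \in C /\ (forall c d, c \in C -> d \in C -> c + d \in C)
  /\ (forall (a : 'F_q) c, c \in C -> a *: c \in C).

Definition cyclic_code (q m : nat) (C : {set 'rV['F_q]_m}) : Prop :=
  linear_code C /\ (forall c, c \in C -> cshift c \in C).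

Definition hweight (q m : nat) (c : 'rV['F_q]_m) : nat := #|[set j | c 0 j != 0]|.

Definition Vtype (q m : nat) := ('F_q * 'I_m)%type.

Definition alpha_fun (q m : nat) (v : Vtype q m) : Vtype q m := (v.1, ordS v.2).
Lemma alpha_inj q m : injective (@alpha_fun q m).
Proof.
move=> [i j] [i' j'] /(congr1 (fun v : Vtype q m => (v.1, ord_pred v.2))).
by rewrite /= !ordSK.
Qed.
Definition alpha (q m : nat) : {perm Vtype q m} := perm (@alpha_inj q m).

Definition beta_fun (q m : nat) (c : 'rV['F_q]_m) (v : Vtype q m) : Vtype q m :=
  (v.1 + c 0 v.2, v.2).
Lemma beta_inj q m (c : 'rV['F_q]_m) : injective (beta_fun c).
Proof.
move=> [i j] [i' j'] E.
have E1 := congr1 fst E; have E2 := congr1 snd E.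
rewrite /= in E1 E2; subst j'.
by rewrite -[i](addrK (c 0 j)) E1 addrK.
Qed.
Definition beta (q m : nat) (c : 'rV['F_q]_m) : {perm Vtype q m} := perm (@beta_inj q m c).

Definition GC (q m : nat) (C : {set 'rV['F_q]_m}) : {set {perm Vtype q m}} :=
  <<[set alpha q m] :|: [set beta c | c in C]>>%g.

Definition intersecting (T : finType) (F : {set {perm T}}) : bool :=
  [forall g in F, forall h in F, exists v, g v == h v].

Definition max_intersecting (T : finType) (G : {set {perm T}}) : nat :=
  \max_(F : {set {perm T}} | (F \subset G) && intersecting F) #|F|.

Definition max_stab (T : finType) (G : {set {perm T}}) : nat :=
  \max_(v : T) #|('C_G[v | 'P])%g|.

Definition int_density (T : finType) (G : {set {perm T}}) : rat :=
  ((max_intersecting G)%:R / (max_stab G)%:R)%R.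

From mathcomp Require Import all_boot all_order all_fingroup all_algebra.
Set Implicit Arguments. Unset Strict Implicit. Unset Printing Implicit Defensive.
Import GRing.Theory.

(* Every element of G(C) has the normal form alpha^k * beta_c with k < m and
   c in C, acting by (i, j) |-> (i + c_(j+k), j + k): the normal forms form a
   group (beta_c alpha^k = alpha^k beta_(shift^k c) and C is shift-invariant)
   containing the generators.  Consequently
   - two elements that agree at some point have the same rotation k, so an
     intersecting family lies in one coset alpha^k beta(C) and has at most |C|
     elements, while beta(C) itself is intersecting because every difference
     c - d of codewords has a zero entry;
   - the stabiliser of (i, j) is beta({c in C | c_j = 0}), of size |C|/q,
     because C contains a codeword with entry 1 at position j (a shift of a
     rescaled nonzero codeword), so that c |-> c_j maps C onto F_q.
   Hence rho(G(C)) = |C| / (|C|/q) = q; transitivity also uses those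
   codewords with a 1 at a prescribed position. *)

Lemma val_iter_ordS m (j : 'I_m) k : val (iter k (@ordS m) j) = ((j + k) %% m)%N.
Proof.
elim: k => [|k IH] /=; first by rewrite addn0 modn_small.
by rewrite IH -addn1 modnDml addn1 addnS.
Qed.

Lemma iter_ordS_inj m (j : 'I_m) k l : (k < m)%N -> (l < m)%N ->
  iter k (@ordS m) j = iter l (@ordS m) j -> k = l.
Proof.
move=> km lm /(congr1 val); rewrite !val_iter_ordS.
by move/eqP; rewrite eqn_modDl !modn_small // => /eqP.
Qed.

Section AlphaBeta.
Variables q m : nat.
Local Notation alpha := (alpha q m).
Local Notation V := (Vtype q m).
Local Open Scope ring_scope.

Lemma alphaX_apply k (v : V) : (alpha ^+ k)%g v = (v.1, iter k (@ordS m) v.2).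
Proof.
elim: k => [|k IH]; first by rewrite expg0 perm1 -surjective_pairing.
by rewrite expgSr permM IH /alpha permE.
Qed.

Lemma betaE (c : 'rV['F_q]_m) (v : V) : beta c v = (v.1 + c 0 v.2, v.2).
Proof. by rewrite /beta permE. Qed.

Lemma betaM (c d : 'rV['F_q]_m) : (beta c * beta d)%g = beta (c + d).
Proof. by apply/permP => v; rewrite permM !betaE mxE addrA. Qed.

Lemma beta0 : beta (0 : 'rV['F_q]_m) = 1%g.
Proof. by apply/permP => v; rewrite betaE perm1 mxE addr0 -surjective_pairing. Qed.

Lemma beta_injective : injective (@beta q m).
Proof.
move=> c d /permP E; apply/rowP => j.
by have := congr1 fst (E (0, j)); rewrite !betaE /= !add0r.
Qed.

Lemma normal_form_apply k (c : 'rV['F_q]_m) (v : V) :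
  (alpha ^+ k * beta c)%g v = (v.1 + c 0 (iter k (@ordS m) v.2), iter k (@ordS m) v.2).
Proof. by rewrite permM alphaX_apply betaE. Qed.

Lemma normal_form_rotation (k l : 'I_m) (c d : 'rV['F_q]_m) (v : V) :
  (alpha ^+ k * beta c)%g v = (alpha ^+ l * beta d)%g v -> k = l.
Proof.
rewrite !normal_form_apply => /(congr1 snd) /= /iter_ordS_inj E.
exact/val_inj/E.
Qed.

Lemma alpha_order : (0 < m)%N -> (alpha ^+ m)%g = 1%g.
Proof.
move=> m0; apply/permP => v; rewrite alphaX_apply perm1 [in RHS](surjective_pairing v).
by congr (_, _); apply/val_inj; rewrite val_iter_ordS modnDr modn_small.
Qed.

Lemma alphaX_mod k : (0 < m)%N -> (alpha ^+ k)%g = (alpha ^+ (k %% m))%g.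
Proof.
move=> m0; rewrite {1}(divn_eq k m) expgD mulnC expgM alpha_order //.
by rewrite expg1n mul1g.
Qed.

Lemma beta_alpha (c : 'rV['F_q]_m) : (beta c * alpha)%g = (alpha * beta (cshift c))%g.
Proof.
apply/permP => v; rewrite !permM !betaE /alpha !permE /alpha_fun /=.
by rewrite /cshift mxE ordSK.
Qed.

Lemma beta_alphaX (c : 'rV['F_q]_m) k :
  (beta c * alpha ^+ k)%g = (alpha ^+ k * beta (iter k (@cshift q m) c))%g.
Proof.
elim: k c => [|k IH] c; first by rewrite expg0 mulg1 mul1g.
by rewrite expgS mulgA beta_alpha -mulgA IH mulgA -iterSr.
Qed.

Lemma iter_cshift_ordS (c : 'rV['F_q]_m) t j :
  (iter t (@cshift q m) c) 0 (iter t (@ordS m) j) = c 0 j.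
Proof. by elim: t => [|t IH] //=; rewrite /cshift mxE ordSK. Qed.

End AlphaBeta.

Section CyclicCode.
Variables (q m : nat) (C : {set 'rV['F_q]_m}).
Hypothesis m_gt0 : (0 < m)%N.
Hypothesis cycC : cyclic_code C.
Local Notation alpha := (alpha q m).
Local Notation V := (Vtype q m).
Local Open Scope ring_scope.

Lemma code0 : 0 \in C.
Proof. by case: cycC => [[]]. Qed.

Lemma codeD c d : c \in C -> d \in C -> c + d \in C.
Proof. by case: cycC => [[_ []]] H _ _; apply: H. Qed.

Lemma codeZ a c : c \in C -> a *: c \in C.
Proof. by case: cycC => [[_ []]] _ H _; apply: H. Qed.

Lemma codeB c d : c \in C -> d \in C -> c - d \in C.
Proof. by move=> cC dC; rewrite codeD // -scaleN1r codeZ. Qed.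

Lemma code_shift c t : c \in C -> iter t (@cshift q m) c \in C.
Proof. by case: cycC => _ sh cC; elim: t => //= t IH; apply: sh. Qed.

Lemma code_unit_at : (exists2 c, c \in C & c != 0) ->
  forall j, exists2 e, e \in C & e 0 j = 1.
Proof.
move=> [c cC nz] j.
have [j0 cj0] : exists j0, c 0 j0 != 0.
  apply/existsP; apply: contraR nz => /existsPn c0; apply/eqP/rowP => k.
  by rewrite mxE; apply/eqP; move: (c0 k); rewrite negbK.
pose t := (j + (m - j0))%N.
have shift_j0 : iter t (@ordS m) j0 = j.
  apply/val_inj; rewrite val_iter_ordS /t addnA addnC addnA subnK ?(ltnW (ltn_ord j0)) //.
  by rewrite modnDl modn_small.
exists ((c 0 j0)^-1 *: iter t (@cshift q m) c); first by rewrite codeZ ?code_shift.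
by rewrite mxE -{1}shift_j0 iter_cshift_ordS mulVf.
Qed.

Definition code_zero_at (j : 'I_m) : {set 'rV['F_q]_m} := [set c in C | c 0 j == 0].

(* c |-> c_j maps C onto F_q, so |C| = q |ker|, via C ~ F_q x ker. *)
Lemma card_code_zero_at j : prime q -> (exists2 c, c \in C & c != 0) ->
  (q * #|code_zero_at j|)%N = #|C|.
Proof.
move=> q_pr nzC; have [e eC e1] := code_unit_at nzC j.
pose join (p : 'F_q * 'rV['F_q]_m) := p.1 *: e + p.2.
have C_join : C = join @: setX [set: 'F_q] (code_zero_at j).
  apply/setP => c; apply/idP/imsetP => [cC|].
    exists (c 0 j, c - c 0 j *: e); last by rewrite /join addrC subrK.
    by rewrite !inE codeB ?codeZ //= !mxE e1 mulr1 subrr.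
  case=> [[a d]]; rewrite !inE /= => /andP [dC _] ->.
  by rewrite codeD ?codeZ.
rewrite [in RHS]C_join card_in_imset ?cardsX ?cardsT ?card_Fp //.
move=> [a c] [b d]; rewrite !inE /= => /andP [_ /eqP c0] /andP [_ /eqP d0] E.
have ab : a = b.
  by have := congr1 (fun r : 'rV['F_q]_m => r 0 j) E; rewrite !mxE e1 c0 d0 !mulr1 !addr0.
by move: E; rewrite /join /= ab => /addrI ->.
Qed.

Definition normal_forms : {set {perm V}} :=
  [set (alpha ^+ k * beta c)%g | k : 'I_m, c : 'rV['F_q]_m in C].

Lemma normal_forms_group : group_set normal_forms.
Proof.
apply/group_setP; split.
  by apply/imset2P; exists (Ordinal m_gt0) 0; rewrite ?code0 // expg0 mul1g beta0.
move=> _ _ /imset2P [k c _ cC ->] /imset2P [l d _ dC ->].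
apply/imset2P; exists (Ordinal (ltn_pmod (k + l) m_gt0)) (iter l (@cshift q m) c + d).
- by [].
- by rewrite codeD ?code_shift.
rewrite /= -alphaX_mod // expgD -betaM !mulgA -(mulgA _ (beta c)) beta_alphaX.
by rewrite !mulgA.
Qed.

Lemma alpha_in_GC : alpha \in GC C.
Proof. by apply: mem_gen; rewrite !inE eqxx. Qed.

Lemma beta_in_GC c : c \in C -> beta c \in GC C.
Proof. by move=> cC; apply: mem_gen; rewrite inE imset_f ?orbT. Qed.

Lemma GC_normal_forms : GC C \subset normal_forms.
Proof.
rewrite /GC -(gen_set_id normal_forms_group); apply: genS.
apply/subsetP => g; rewrite inE => /orP [/set1P ->|/imsetP [c cC ->]]; apply/imset2P.
  exists (Ordinal (ltn_pmod 1 m_gt0)) 0; rewrite ?code0 //=.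
  by rewrite -alphaX_mod // expg1 beta0 mulg1.
by exists (Ordinal m_gt0) c; rewrite ?expg0 ?mul1g.
Qed.

Lemma GC_transitive : (exists2 c, c \in C & c != 0) ->
  [transitive GC C, on [set: V] | 'P].
Proof.
move=> nzC; apply/imsetP; exists (0, Ordinal m_gt0); first by rewrite inE.
apply/setP => [[i j]]; rewrite inE; apply/esym/orbitP.
have [e eC e1] := code_unit_at nzC j.
have rot_j : iter j (@ordS m) (Ordinal m_gt0) = j.
  by apply/val_inj; rewrite val_iter_ordS add0n modn_small.
exists (alpha ^+ j * beta (i *: e))%g.
  by rewrite groupM ?groupX ?alpha_in_GC ?beta_in_GC ?codeZ.
by rewrite /= apermE normal_form_apply /= rot_j mxE e1 mulr1 add0r.
Qed.

Lemma stabilizer_GC (v : V) :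
  ('C_(GC C)[v | 'P])%g = (@beta q m) @: code_zero_at v.2.
Proof.
apply/setP => g; rewrite inE; apply/andP/imsetP => [[gG /astab1P /= gv]|].
  have /imset2P [k c _ cC def_g] := subsetP GC_normal_forms g gG.
  have k0 : k = Ordinal m_gt0.
    apply: (@normal_form_rotation q m _ _ c 0 v).
    by rewrite -def_g expg0 mul1g beta0 perm1.
  move: gv; rewrite apermE def_g k0 expg0 mul1g betaE => /(congr1 fst) /= cv.
  exists c => //; rewrite inE cC /=; apply/eqP/(@addrI _ v.1).
  by rewrite cv addr0.
case=> c; rewrite inE => /andP [cC /eqP cv0] ->; split; first exact: beta_in_GC.
by apply/astab1P; rewrite /= apermE betaE cv0 addr0 -surjective_pairing.
Qed.

Lemma card_stabilizer_GC (v : V) : prime q -> (exists2 c, c \in C & c != 0) ->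
  (q * #|('C_(GC C)[v | 'P])%g|)%N = #|C|.
Proof.
move=> q_pr nzC.
by rewrite stabilizer_GC card_imset ?card_code_zero_at //; apply: beta_injective.
Qed.

(* An intersecting family lies in a single coset alpha^k beta(C). *)
Lemma intersecting_card (F : {set {perm V}}) :
  F \subset GC C -> intersecting F -> (#|F| <= #|C|)%N.
Proof.
move=> sFG /forall_inP interF.
have sFN := subset_trans sFG GC_normal_forms.
have [->|[g gF]] := set_0Vmem F; first by rewrite cards0.
have /imset2P [k c _ _ def_g] := subsetP sFN g gF.
apply: (leq_trans _ (leq_imset_card (fun d => alpha ^+ k * beta d)%g C)).
apply/subset_leq_card/subsetP => h hF.
have /imset2P [l d _ dC def_h] := subsetP sFN h hF.
have /forall_inP /(_ h hF) /existsP [v /eqP ghv] := interF g gF.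
have lk : l = k.
  by apply: (normal_form_rotation (c := d) (d := c) (v := v)); rewrite -def_g -def_h.
by rewrite def_h lk; apply: imset_f.
Qed.

(* beta(C) is intersecting: c - d always has a zero entry j, and then beta_c
   and beta_d agree at (0, j). *)
Lemma beta_code_intersecting : (forall c, c \in C -> hweight c != m) ->
  intersecting ((@beta q m) @: C).
Proof.
move=> no_full; apply/forall_inP => _ /imsetP [c cC ->].
apply/forall_inP => _ /imsetP [d dC ->].
have [j cdj] : exists j, (c - d) 0 j == 0.
  apply/existsP; apply: contraR (no_full _ (codeB cC dC)) => /existsPn nz.
  apply/eqP; rewrite -[m in RHS]card_ord -cardsT /hweight.
  by apply: eq_card => j; rewrite !inE nz.
apply/existsP; exists (0, j); rewrite !betaE /=.
by move: cdj; rewrite !mxE subr_eq0 => /eqP ->.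
Qed.

(* The largest stabiliser of G(C) has |C|/q elements (all stabilisers do). *)
Lemma max_stab_GC : prime q -> (exists2 c, c \in C & c != 0) ->
  (q * max_stab (GC C))%N = #|C|.
Proof.
move=> q_pr nzC; pose v0 : V := (0, Ordinal m_gt0).
have stab v : #|('C_(GC C)[v | 'P])%g| = #|('C_(GC C)[v0 | 'P])%g|.
  by apply/eqP; rewrite -(eqn_pmul2l (prime_gt0 q_pr)) !card_stabilizer_GC.
rewrite -(card_stabilizer_GC v0) //; congr (_ * _)%N; apply/eqP.
rewrite eqn_leq; apply/andP; split; first by apply/bigmax_leqP => v _; rewrite stab.
exact: (leq_bigmax_cond (F := fun v => #|('C_(GC C)[v | 'P])%g|)).
Qed.

(* The largest intersecting family of G(C) has |C| elements, beta(C) being one. *)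
Lemma max_intersecting_GC : (forall c, c \in C -> hweight c != m) ->
  max_intersecting (GC C) = #|C|.
Proof.
move=> no_full; apply/eqP; rewrite eqn_leq; apply/andP; split.
  by apply/bigmax_leqP => F /andP [sFG interF]; apply: intersecting_card.
rewrite -(card_imset C (@beta_injective q m)).
apply: (leq_bigmax_cond (F := fun F : {set {perm V}} => #|F|)).
rewrite beta_code_intersecting // andbT.
by apply/subsetP => _ /imsetP [c cC ->]; apply: beta_in_GC.
Qed.

End CyclicCode.

Local Open Scope ring_scope.
Unset Implicit Arguments.

Theorem theorem1p1 (q m : nat) (C : {set 'rV['F_q]_m}) :
  prime q -> (0 < m)%N ->
  cyclic_code C ->
  (exists2 c, c \in C & c != 0) ->
  (forall c, c \in C -> hweight c != m) ->
  [transitive GC C, on [set: Vtype q m] | 'P] /\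
  int_density (GC C) = q%:R.
Proof.
move=> q_pr m_gt0 cycC nzC no_full; split; first exact: GC_transitive.
have stab_C := max_stab_GC m_gt0 cycC q_pr nzC.
have stab_gt0 : (0 < max_stab (GC C))%N.
  by rewrite -(ltn_pmul2l (prime_gt0 q_pr)) muln0 stab_C; apply/card_gt0P; exists 0; apply: code0.
rewrite /int_density max_intersecting_GC // -stab_C natrM mulfK //.
by rewrite Num.Theory.pnatr_eq0 -lt0n.
Qed.
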